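(* Let $T:\mathcal{M}_2\to\mathcal{M}_2$ be a random Pauli channel $T(\rho)=p_1\sigma_1\rho\sigma_1+p_2\sigma_2\rho\sigma_2+p_3\sigma_3\rho\sigma_3+(1-p_1-p_2-p_3)\rho$ and define $p=2\min\{p_1p_2+p_1p_3,\,p_2p_1+p_2p_3,\,p_3p_1+p_3p_2\}$. Then for every density matrix $\rho\in\mathcal{M}_2$, $$S(T(\rho))-S(\rho)\geq p(\log 2-S(\rho)).$$
   Context: $(p_1,p_2,p_3,1-p_1-p_2-p_3)$ is a probability distribution, $\sigma_i$ are the Pauli matrices, and $S(\rho)=-\text{tr}(\rho\log\rho)$. *)

From HB Require Import structures.
From mathcomp Require Import all_boot all_order all_algebra.
From mathcomp Require Import complex.
From mathcomp Require Import reals exp.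
Set Implicit Arguments. Unset Strict Implicit. Unset Printing Implicit Defensive.
Import Order.TTheory GRing.Theory Num.Theory.
Local Open Scope ring_scope.

Section Qubit.
Variable R : realType.
Local Notation C := R[i].

Definition cplx (a b : R) : C := Complex a b.

Definition sigma1 : 'M[C]_2 :=
  \matrix_(i < 2, j < 2) (if i == j then 0 else 1).
Definition sigma2 : 'M[C]_2 :=
  \matrix_(i < 2, j < 2)
    (if i == j then 0 else if (i == 0 :> nat) then cplx 0 (-1) else cplx 0 1).
Definition sigma3 : 'M[C]_2 :=
  \matrix_(i < 2, j < 2)
    (if i == j then (if (i == 0 :> nat) then 1 else -1) else 0).

Definition adjoint (m n : nat) (A : 'M[C]_(m, n)) : 'M[C]_(n, m) :=
  map_mx (@conjc R) A^T.

Definition density (rho : 'M[C]_2) : Prop :=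
  [/\ adjoint rho = rho,
      forall v : 'cV[C]_2, 0 <= (adjoint v *m rho *m v) 0 0
    & \tr rho = 1].

Definition pauli_channel (p1 p2 p3 : R) (rho : 'M[C]_2) : 'M[C]_2 :=
  (p1%:C)%C *: (sigma1 *m rho *m sigma1)
  + (p2%:C)%C *: (sigma2 *m rho *m sigma2)
  + (p3%:C)%C *: (sigma3 *m rho *m sigma3)
  + ((1 - p1 - p2 - p3)%:C)%C *: rho.

Definition spectrum2 (A : 'M[C]_2) (l1 l2 : R) : Prop :=
  char_poly A = ('X - ((l1%:C)%C)%:P) * ('X - ((l2%:C)%C)%:P).

(* von Neumann entropy  S = -tr(rho log rho) = - sum_k l_k log l_k,
   computed from the eigenvalues l1 l2 (natural log; 0 log 0 = 0) *)
Definition vn_entropy2 (l1 l2 : R) : R :=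
  - (l1 * ln l1 + l2 * ln l2).

End Qubit.

From HB Require Import structures.
From mathcomp Require Import all_boot all_order all_algebra.
From mathcomp Require Import complex.
From mathcomp Require Import reals exp.
From mathcomp Require Import ring lra.
Set Implicit Arguments. Unset Strict Implicit. Unset Printing Implicit Defensive.
Import Order.TTheory GRing.Theory Num.Theory.
Local Open Scope ring_scope.

(* Write rho = (1 + x sigma1 + y sigma2 + z sigma3) / 2. Its eigenvalues are (1 +- |r|) / 2
   with r = (x, y, z), and the Pauli channel multiplies the components of r by
   1 - 2 (p2 + p3), 1 - 2 (p1 + p3), 1 - 2 (p1 + p2), each at most 1 - p in absolute
   value. So T(rho) has the spectrum of a state whose Bloch radius is at most (1 - p) |r|.
   Since u log u is convex, the binary entropy of (1 +- s) / 2 decreases in |s| and is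
   concave in s; comparing with the depolarised state (1 - p) rho + p / 2 gives
   S(T rho) >= (1 - p) S(rho) + p log 2. *)

Section Xlnx.
Variable R : realType.

Definition xlnx (u : R) : R := u * ln u.

Lemma xlnx_ge_tangent (x m : R) : 0 <= x -> 0 < m ->
  xlnx m + (ln m + 1) * (x - m) <= xlnx x.
Proof.
rewrite /xlnx => x_ge0 m_gt0.
have [->|x_neq0] := eqVneq x 0; first by rewrite (@ln0 _ 0) // mulr0; nra.
have x_gt0 : 0 < x by rewrite lt_def x_neq0 x_ge0.
have : ln (m / x) <= m / x - 1.
  have mx_gt0 : 0 < m / x by exact: divr_gt0.
  by have := @le_ln1Dx R (m / x - 1); rewrite (addrC 1) subrK; apply; lra.
rewrite ln_div ?posrE // -(ler_pM2l x_gt0) [X in _ <= X]mulrBr mulrCA divff ?gt_eqF // mulr1.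
nra.
Qed.

Lemma xlnx_convex (x y k : R) : 0 <= x -> 0 <= y -> 0 <= k <= 1 ->
  xlnx (k * x + (1 - k) * y) <= k * xlnx x + (1 - k) * xlnx y.
Proof.
move=> x_ge0 y_ge0 /andP[k_ge0 k_le1].
set M := k * x + (1 - k) * y.
have kx_ge0 : 0 <= k * x by exact: mulr_ge0.
have ky_ge0 : 0 <= (1 - k) * y by apply: mulr_ge0; lra.
have [M0|M_neq0] := eqVneq M 0.
  have kx0 : k * x = 0 by move: M0; rewrite /M; lra.
  have ky0 : (1 - k) * y = 0 by move: M0; rewrite /M; lra.
  by rewrite M0 /xlnx mul0r !mulrA kx0 ky0 !mul0r addr0.
have M_gt0 : 0 < M by rewrite lt_def M_neq0 addr_ge0.
(* average the supporting lines of [xlnx] at [M] through [x] and [y] *)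
have tx := xlnx_ge_tangent x_ge0 M_gt0; have ty := xlnx_ge_tangent y_ge0 M_gt0.
have <- : k * (xlnx M + (ln M + 1) * (x - M)) +
          (1 - k) * (xlnx M + (ln M + 1) * (y - M)) = xlnx M by rewrite /M; ring.
by apply: lerD; apply: ler_wpM2l => //; lra.
Qed.

Lemma xlnx_pair_le (a m : R) : 0 <= a <= 1 -> (2 * m - 1) ^+ 2 <= (2 * a - 1) ^+ 2 ->
  xlnx m + xlnx (1 - m) <= xlnx a + xlnx (1 - a).
Proof.
move=> /andP[a_ge0 a_le1] le_gap.
have [a_half|a_neq_half] := eqVneq (2 * a - 1) 0.
  rewrite a_half expr0n /= in le_gap.
  have : (2 * m - 1) ^+ 2 == 0 by rewrite eq_le le_gap sqr_ge0.
  by rewrite sqrf_eq0 => /eqP m_half; have -> : m = a by lra.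
(* [m] is a convex combination of [a] and [1 - a] *)
set r := (2 * m - 1) / (2 * a - 1).
have r_sqr_le1 : r ^+ 2 <= 1.
  by rewrite expr_div_n ler_pdivrMr ?mul1r // lt_def sqr_ge0 sqrf_eq0 a_neq_half.
set k := (1 + r) / 2.
have k01 : 0 <= k <= 1 by rewrite /k; apply/andP; split; nra.
have -> : m = k * a + (1 - k) * (1 - a) by rewrite /k /r; field.
have -> : 1 - (k * a + (1 - k) * (1 - a)) = k * (1 - a) + (1 - k) * a by ring.
have := xlnx_convex a_ge0 (_ : 0 <= 1 - a) k01.
have := xlnx_convex (_ : 0 <= 1 - a) a_ge0 k01.
lra.
Qed.

Lemma vn_entropy2_sub_ge (l1 l2 m1 m2 t : R) : 0 <= t <= 1 ->
    l1 + l2 = 1 -> m1 + m2 = 1 -> 0 <= l1 * l2 ->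
    (m1 - m2) ^+ 2 <= t ^+ 2 * (l1 - l2) ^+ 2 ->
  vn_entropy2 m1 m2 - vn_entropy2 l1 l2 >= (1 - t) * (ln 2 - vn_entropy2 l1 l2).
Proof.
move=> t01 l_sum m_sum l_prod gap; have /andP[t_ge0 t_le1] := t01.
have l1_ge0 : 0 <= l1 by nra.
have l2_ge0 : 0 <= l2 by nra.
(* the spectrum of the depolarised state [t rho + (1 - t) / 2] *)
set a := t * l1 + (1 - t) / 2.
have a01 : 0 <= a <= 1 by rewrite /a; apply/andP; split; nra.
have half_ge0 : 0 <= 2^-1 :> R by rewrite invr_ge0 ler0n.
have xlnx_a : xlnx a <= t * xlnx l1 + (1 - t) * xlnx 2^-1 by exact: xlnx_convex.
have xlnx_b : xlnx (1 - a) <= t * xlnx l2 + (1 - t) * xlnx 2^-1.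
  by rewrite (_ : 1 - a = t * l2 + (1 - t) / 2); [exact: xlnx_convex | rewrite /a; nra].
have xlnx_half : xlnx 2^-1 = - ln 2 / 2 by rewrite /xlnx lnV ?posrE // mulrC.
have : xlnx m1 + xlnx m2 <= xlnx a + xlnx (1 - a).
  rewrite (_ : m2 = 1 - m1); last by lra.
  apply: xlnx_pair_le => //.
  have -> : 2 * a - 1 = t * (l1 - l2) by rewrite /a; nra.
  by rewrite exprMn (_ : 2 * m1 - 1 = m1 - m2) //; lra.
move: xlnx_a xlnx_b; rewrite /vn_entropy2 xlnx_half /xlnx; lra.
Qed.

End Xlnx.

Lemma sum_ord2 (V : nmodType) (F : 'I_2 -> V) : \sum_i F i = F 0 + F 1.
Proof. by rewrite !big_ord_recl big_ord0 addr0; congr (_ + F _); apply/val_inj. Qed.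

Lemma matrix2P (T : Type) (A B : 'M[T]_2) :
  A 0 0 = B 0 0 -> A 0 1 = B 0 1 -> A 1 0 = B 1 0 -> A 1 1 = B 1 1 -> A = B.
Proof.
have ord2 (k : 'I_2) : k = 0 \/ k = 1.
  by case: k => [[|[|//]] ?]; [left | right]; apply/val_inj.
by move=> *; apply/matrixP => i j; case: (ord2 i) (ord2 j) => -> [] ->.
Qed.

Section Mx2.
Variable R : comNzRingType.

Lemma mxtrace2 (A : 'M[R]_2) : \tr A = A 0 0 + A 1 1.
Proof. by rewrite /mxtrace sum_ord2. Qed.

Lemma det_mx2 (A : 'M[R]_2) : \det A = A 0 0 * A 1 1 - A 0 1 * A 1 0.
Proof.
rewrite (expand_det_row _ 0) sum_ord2 /cofactor !det_mx11 !mxE /=.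
rewrite (_ : lift 0 0 = 1) 1?(_ : lift 1 0 = 0); try exact: val_inj.
by rewrite expr0 expr1 mulN1r mul1r mulrN.
Qed.

End Mx2.

Section Qubit.
Variable R : realType.
Local Notation C := R[i].

(* (1 + x sigma1 + y sigma2 + z sigma3) / 2, written out entrywise *)
Definition bloch (x y z : R) : 'M[C]_2 := \matrix_(i < 2, j < 2)
  (if i == j then (if (i == 0 :> nat) then (1 + z) / 2 else (1 - z) / 2)%:C%C
   else if (i == 0 :> nat) then cplx (x / 2) (- y / 2) else cplx (x / 2) (y / 2)).

Lemma density_bloch (rho : 'M[C]_2) : density rho -> exists x y z, rho = bloch x y z.
Proof.
case=> rho_herm _; rewrite mxtrace2 => tr_rho.
have conj_rho i j : (rho j i)^*%C = rho i j.
  by have := congr1 (fun M : 'M_2 => M i j) rho_herm; rewrite /adjoint !mxE.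
exists (2 * complex.Re (rho 0 1)), (- 2 * complex.Im (rho 0 1)),
  (2 * complex.Re (rho 0 0) - 1).
apply/matrix2P; rewrite !mxE /= -?(conj_rho 1 0) /cplx;
  move: (conj_rho 0 0) (conj_rho 1 1) tr_rho;
  case: (rho 0 0) => a a'; case: (rho 1 1) => d d'; case: (rho 0 1) => b b' /=;
  simpc => -[a'0] [d'0] [tr_re tr_im]; congr (_ +i* _)%C; lra.
Qed.

Lemma pauli_channel_bloch p1 p2 p3 x y z :
  pauli_channel p1 p2 p3 (bloch x y z) =
  bloch ((1 - 2 * (p2 + p3)) * x) ((1 - 2 * (p1 + p3)) * y) ((1 - 2 * (p1 + p2)) * z).
Proof.
apply/matrix2P;
  rewrite /pauli_channel /bloch /sigma1 /sigma2 /sigma3 !(mxE, sum_ord2) /= /cplx;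
  rewrite -[0 : C]/(0 +i* 0)%C -[1 : C]/(1 +i* 0)%C; simpc; congr (_ +i* _)%C; ring.
Qed.

Lemma mxtrace_bloch x y z : \tr (bloch x y z) = 1.
Proof. by rewrite mxtrace2 !mxE /=; simpc; congr (_ +i* _)%C; field. Qed.

Lemma det_bloch x y z : \det (bloch x y z) = ((1 - (x ^+ 2 + y ^+ 2 + z ^+ 2)) / 4)%:C%C.
Proof. by rewrite det_mx2 !mxE /= /cplx; simpc; congr (_ +i* _)%C; field. Qed.

(* Testing positivity on the columns of the adjugate gives [A00^* det A] and [A11^* det A]. *)
Lemma psd_mx2_det_ge0 (A : 'M[C]_2) :
  (forall v : 'cV[C]_2, 0 <= (adjoint v *m A *m v) 0 0) -> 0 <= (\tr A)^*%C * \det A.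
Proof.
move=> A_psd.
have := addr_ge0 (A_psd (\col_i (if i == 0 then - A 0 1 else A 0 0)))
                 (A_psd (\col_i (if i == 0 then A 1 1 else - A 1 0))).
by rewrite /adjoint !(mxE, sum_ord2) /= mxtrace2 det_mx2 rmorphD; congr (_ <= _); ring.
Qed.

Lemma spectrum2_tr_det (A : 'M[C]_2) l1 l2 : spectrum2 A l1 l2 ->
  \tr A = (l1 + l2)%:C%C /\ \det A = (l1 * l2)%:C%C.
Proof.
rewrite /spectrum2 => charA.
have := char_poly_trace A (isT : 0 < 2)%N; have := char_poly_det A.
rewrite charA !(coefE, mulrBl, mulrBr) /= sqrrN expr1n mul1r => <- tr_coef.
rewrite rmorphD rmorphM; split; last by ring.
by apply: oppr_inj; rewrite -tr_coef; ring.
Qed.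

Lemma spectrum2_bloch x y z l1 l2 : spectrum2 (bloch x y z) l1 l2 ->
  l1 + l2 = 1 /\ (l1 - l2) ^+ 2 = x ^+ 2 + y ^+ 2 + z ^+ 2.
Proof.
move=> /spectrum2_tr_det[]; rewrite mxtrace_bloch det_bloch => -[tr_l] [det_l].
have -> : (l1 - l2) ^+ 2 = (l1 + l2) ^+ 2 - 4 * (l1 * l2) by ring.
by rewrite -tr_l -det_l; split=> //; field.
Qed.

Lemma density_bloch_norm_le1 x y z : density (bloch x y z) -> x ^+ 2 + y ^+ 2 + z ^+ 2 <= 1.
Proof.
case=> _ /psd_mx2_det_ge0 + _; rewrite mxtrace_bloch conjc1 mul1r det_bloch lecE /=.
by case/andP=> _; lra.
Qed.

End Qubit.

Lemma pauli_factor_sqr_le (R : realFieldType) (q1 q2 q3 P : R) :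
    0 <= q1 -> 0 <= q2 -> 0 <= q3 -> q1 + q2 + q3 <= 1 ->
    0 <= P -> P <= q1 * (q2 + q3) ->
  (1 - 2 * (q2 + q3)) ^+ 2 <= (1 - 2 * P) ^+ 2.
Proof.
move=> q1_ge0 q2_ge0 q3_ge0 q_sum P_ge0 P_le.
have q23_ge0 : 0 <= q2 + q3 by exact: addr_ge0.
have mul_le : q1 * (q2 + q3) <= q2 + q3 by rewrite ler_piMl //; lra.
have mul_le' : (1 + q1) * (q2 + q3) <= (1 + q1) * (1 - q1) by rewrite ler_wpM2l //; lra.
rewrite -subr_ge0.
have -> : (1 - 2 * P) ^+ 2 - (1 - 2 * (q2 + q3)) ^+ 2 =
  (2 * (q2 + q3) - 2 * P) * (2 - 2 * P - 2 * (q2 + q3)) by ring.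
apply: mulr_ge0; nra.
Qed.

Lemma pauli_bloch_contraction (R : realFieldType) (p1 p2 p3 P x y z : R) :
    0 <= p1 -> 0 <= p2 -> 0 <= p3 -> p1 + p2 + p3 <= 1 -> 0 <= P ->
    P <= p1 * (p2 + p3) -> P <= p2 * (p1 + p3) -> P <= p3 * (p1 + p2) ->
  ((1 - 2 * (p2 + p3)) * x) ^+ 2 + ((1 - 2 * (p1 + p3)) * y) ^+ 2
    + ((1 - 2 * (p1 + p2)) * z) ^+ 2 <= (1 - 2 * P) ^+ 2 * (x ^+ 2 + y ^+ 2 + z ^+ 2).
Proof.
move=> p1_ge0 p2_ge0 p3_ge0 p_sum P_ge0 P_le1 P_le2 P_le3.
have le1 := pauli_factor_sqr_le p1_ge0 p2_ge0 p3_ge0 p_sum P_ge0 P_le1.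
have le2 : (1 - 2 * (p1 + p3)) ^+ 2 <= (1 - 2 * P) ^+ 2.
  by apply: (pauli_factor_sqr_le p2_ge0 p1_ge0 p3_ge0) => //; lra.
have le3 : (1 - 2 * (p1 + p2)) ^+ 2 <= (1 - 2 * P) ^+ 2.
  by apply: (pauli_factor_sqr_le p3_ge0 p1_ge0 p2_ge0) => //; lra.
rewrite !exprMn.
have := ler_wpM2r (sqr_ge0 x) le1; have := ler_wpM2r (sqr_ge0 y) le2.
have := ler_wpM2r (sqr_ge0 z) le3; lra.
Qed.

Theorem mainTheorem18 (R : realType) (p1 p2 p3 : R) (rho : 'M[R[i]]_2)
    (l1 l2 m1 m2 : R) :
  0 <= p1 -> 0 <= p2 -> 0 <= p3 -> p1 + p2 + p3 <= 1 ->
  density rho ->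
  spectrum2 rho l1 l2 ->
  spectrum2 (pauli_channel p1 p2 p3 rho) m1 m2 ->
  let p := 2 * Num.min (p1 * p2 + p1 * p3)
                 (Num.min (p2 * p1 + p2 * p3) (p3 * p1 + p3 * p2)) in
  vn_entropy2 m1 m2 - vn_entropy2 l1 l2 >= p * (ln 2 - vn_entropy2 l1 l2).
Proof.
move=> p1_ge0 p2_ge0 p3_ge0 p_sum rho_density spec_rho spec_T /=.
have [x [y [z rho_bloch]]] := density_bloch rho_density; subst rho.
have r_le1 := density_bloch_norm_le1 rho_density.
rewrite pauli_channel_bloch in spec_T.
have [l_sum l_gap] := spectrum2_bloch spec_rho.
have [m_sum m_gap] := spectrum2_bloch spec_T.
set P := Num.min _ _.
have P_le1 : P <= p1 * (p2 + p3) by rewrite /P mulrDr ge_min lexx.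
have P_le2 : P <= p2 * (p1 + p3) by rewrite /P mulrDr !ge_min lexx orbT.
have P_le3 : P <= p3 * (p1 + p2) by rewrite /P mulrDr !ge_min lexx !orbT.
have P_ge0 : 0 <= P by rewrite /P !le_min -!mulrDr !mulr_ge0 ?addr_ge0.
have P_le_quarter : P <= 1 / 4.
  have : p1 * (p2 + p3) <= p1 * (1 - p1) by rewrite ler_wpM2l //; lra.
  by have := sqr_ge0 (p1 - 1 / 2); lra.
rewrite -[2 * P](subKr 1); apply: vn_entropy2_sub_ge => //.
- by apply/andP; split; lra.
- have : (l1 - l2) ^+ 2 = (l1 + l2) ^+ 2 - 4 * (l1 * l2) by ring.
  by rewrite l_sum; lra.
- by rewrite m_gap l_gap; exact: pauli_bloch_contraction.
Qed.
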